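(* Let $p\in(0,1)$ and let $\ell_p$ be the space of real sequences $(x_n)_{n=1}^\infty$ with $\sum_{n=1}^\infty|x_n|^p<\infty$, with its $p$-norm $\|x\|_p=\sum_{n=1}^\infty|x_n|^p$. Let $e_n=(0,\ldots,0,1,0,\ldots)$ (with $1$ in the $n$th place). Then for any infinite dimensional subspace $\mathcal{S}$ of $\ell_\infty$ properly containing $c_0$, there is no subset of $\ell_p$ that is $[(e_n)_{n=1}^\infty,\mathcal{S}]$-lineable.
   Context: $\ell_\infty$ is the space of bounded real sequences and $c_0$ the space of real sequences converging to $0$, viewed as subspaces of $\mathbb{R}^{\mathbb{N}}$. For a subspace $\mathcal{S}$ of $\mathbb{R}^{\mathbb{N}}$ and a sequence $(u_n)$ in a topological vector space $X$, a subset $A\subset X$ is $[(u_n)_{n=1}^\infty,\mathcal{S}]$-lineable if for each $(c_n)_{n=1}^\infty\in\mathcal{S}$ the series $\sum_{n=1}^\infty c_nu_n$ converges in $X$ to a vector of $A\cup\{0\}$. Here $\ell_p$ carries the topology induced by its $p$-norm. *)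

From Stdlib Require Import Reals.
From Coquelicot Require Import Coquelicot.
Open Scope R_scope.

(* Real sequences x : nat -> R; index 0 plays the role of the paper's index 1. *)
Definition seqR := nat -> R.

(* |t|^p with the convention 0^p = 0 (p > 0). *)
Definition pabs (p t : R) : R :=
  if Req_EM_T t 0 then 0 else Rpower (Rabs t) p.

Definition in_lp (p : R) (x : seqR) : Prop := ex_series (fun n => pabs p (x n)).

Definition lp_norm (p : R) (x : seqR) : R := Series (fun n => pabs p (x n)).
Definition lp_dist (p : R) (x y : seqR) : R := lp_norm p (fun n => x n - y n).

Definition in_linf (x : seqR) : Prop := exists M, forall n, Rabs (x n) <= M.
Definition in_c0 (x : seqR) : Prop := is_lim_seq x 0.

Definition unit_vec (n : nat) : seqR := fun k => if Nat.eqb k n then 1 else 0.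

Fixpoint lincomb (n : nat) (a : nat -> R) (v : nat -> seqR) : seqR :=
  match n with
  | O => fun _ => 0
  | S m => fun k => lincomb m a v k + a m * v m k
  end.

Definition is_subspace (S : seqR -> Prop) : Prop :=
  S (fun _ => 0) /\
  (forall x y, S x -> S y -> S (fun k => x k + y k)) /\
  (forall (c : R) x, S x -> S (fun k => c * x k)).

Definition infinite_dim (S : seqR -> Prop) : Prop :=
  forall n : nat, exists v : nat -> seqR,
    (forall i, (i < n)%nat -> S (v i)) /\
    (forall a : nat -> R, (forall k, lincomb n a v k = 0) ->
       forall i, (i < n)%nat -> a i = 0).

Definition series_cvg_lp (p : R) (c : seqR) (u : nat -> seqR) (x : seqR) : Prop :=
  in_lp p x /\ is_lim_seq (fun N => lp_dist p (lincomb N c u) x) 0.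

Definition lineable_lp (p : R) (u : nat -> seqR) (S : seqR -> Prop) (A : seqR -> Prop) : Prop :=
  forall c, S c -> exists x, (A x \/ x = (fun _ => 0)) /\ series_cvg_lp p c u x.

(* If the series sum_n c_n e_n converges in l_p to some y, then every coordinate
   map is dominated by the p-distance, so y = c coordinatewise; but the terms
   of an l_p sequence tend to 0, so c is in c_0.  Hence any c in S outside c_0
   already defeats lineability, whatever the set A. *)
From Stdlib Require Import Reals Lia Lra.
From Coquelicot Require Import Coquelicot.
Open Scope R_scope.

Lemma lincomb_unit_vec (N : nat) (c : seqR) (k : nat) :
  lincomb N c unit_vec k = if Nat.ltb k N then c k else 0.
Proof.
  induction N as [|m IH]; simpl.
  - destruct (Nat.ltb_spec k 0); [lia | reflexivity].
  - rewrite IH. unfold unit_vec.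
    destruct (Nat.ltb_spec k m), (Nat.ltb_spec k (S m)), (Nat.eqb_spec k m);
      subst; try lia; ring.
Qed.

Lemma pabs_ge0 (p t : R) : 0 <= pabs p t.
Proof.
  unfold pabs. destruct (Req_EM_T t 0); [lra |].
  left. apply exp_pos.
Qed.

Lemma pabs_eq0 (p t : R) : pabs p t = 0 -> t = 0.
Proof.
  unfold pabs. destruct (Req_EM_T t 0) as [E | _]; [easy |].
  intro H. pose proof (exp_pos (p * ln (Rabs t))). unfold Rpower in H. lra.
Qed.

Lemma pabs_opp (p t : R) : pabs p (- t) = pabs p t.
Proof.
  unfold pabs. destruct (Req_EM_T (- t) 0), (Req_EM_T t 0); try lra.
  now rewrite Rabs_Ropp.
Qed.

Lemma Rabs_lt_of_pabs_lt (p eps t : R) :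
  0 < p -> 0 < eps -> pabs p t < Rpower eps p -> Rabs t < eps.
Proof.
  intros Hp Heps. unfold pabs. destruct (Req_EM_T t 0) as [-> | Ht].
  - now rewrite Rabs_R0.
  - intro Hlt. destruct (Rlt_or_le (Rabs t) eps) as [| Hle]; [easy |].
    pose proof (Rle_Rpower_l eps (Rabs t) p (Rlt_le _ _ Hp) (conj Heps Hle)).
    lra.
Qed.

Lemma in_lp_cvg0 (p : R) (y : seqR) : 0 < p -> in_lp p y -> is_lim_seq y 0.
Proof.
  intros Hp Hy. apply ex_series_lim_0, is_lim_seq_spec in Hy.
  apply is_lim_seq_spec. intro eps.
  assert (Heps_p : 0 < Rpower eps p) by apply exp_pos.
  destruct (Hy (mkposreal _ Heps_p)) as [N HN]. exists N. intros n Hn.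
  specialize (HN n Hn). simpl in HN. rewrite Rminus_0_r in HN |- *.
  rewrite Rabs_pos_eq in HN by apply pabs_ge0.
  exact (Rabs_lt_of_pabs_lt p eps (y n) Hp (cond_pos eps) HN).
Qed.

Lemma in_lp_eventually_ext (p : R) (x y : seqR) (N : nat) :
  (forall n, (N <= n)%nat -> pabs p (x n) = pabs p (y n)) ->
  in_lp p x -> in_lp p y.
Proof.
  intros Hxy Hx. unfold in_lp in *.
  apply (ex_series_incr_n _ N). apply (ex_series_incr_n _ N) in Hx.
  eapply ex_series_ext; [| exact Hx].
  intro n. apply Hxy. lia.
Qed.

Lemma Series_ge_term (a : nat -> R) :
  (forall n, 0 <= a n) -> ex_series a -> forall k, a k <= Series a.
Proof.
  intros Ha Hex k.
  assert (Hsum : infinite_sum a (Series a))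
    by (apply is_series_Reals, Series_correct, Hex).
  apply Rle_trans with (sum_f_R0 a k); [| exact (sum_incr a k _ Hsum Ha)].
  destruct k as [| k]; simpl; [lra |].
  pose proof (cond_pos_sum a k Ha). lra.
Qed.

Lemma pabs_sub_le_lp_dist (p : R) (x y : seqR) (k : nat) :
  in_lp p (fun n => x n - y n) -> pabs p (x k - y k) <= lp_dist p x y.
Proof.
  intro Hxy.
  exact (Series_ge_term (fun n => pabs p (x n - y n)) (fun n => pabs_ge0 p _) Hxy k).
Qed.

Lemma series_cvg_lp_unit_vec_coord (p : R) (c y : seqR) :
  series_cvg_lp p c unit_vec y -> forall k, c k = y k.
Proof.
  intros [Hy Hlim] k.
  assert (Hdom : forall N, (k < N)%nat ->
            pabs p (c k - y k) <= lp_dist p (lincomb N c unit_vec) y).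
  { intros N HkN.
    assert (Hpart : in_lp p (fun n => lincomb N c unit_vec n - y n)).
    { apply (in_lp_eventually_ext p y _ N); [| exact Hy].
      intros n HNn. rewrite lincomb_unit_vec.
      destruct (Nat.ltb_spec n N); [lia |].
      now rewrite Rminus_0_l, pabs_opp. }
    pose proof (pabs_sub_le_lp_dist p _ _ k Hpart) as Hk.
    rewrite lincomb_unit_vec in Hk.
    destruct (Nat.ltb_spec k N); [exact Hk | lia]. }
  assert (Hle : Rbar_le (pabs p (c k - y k)) 0).
  { eapply is_lim_seq_le_loc; [| apply is_lim_seq_const | exact Hlim].
    exists (S k). intros N HN. apply Hdom. lia. }
  simpl in Hle. pose proof (pabs_ge0 p (c k - y k)).
  assert (Hzero : c k - y k = 0) by (apply (pabs_eq0 p); lra).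
  lra.
Qed.

Lemma series_cvg_lp_unit_vec_c0 (p : R) (c y : seqR) :
  0 < p -> series_cvg_lp p c unit_vec y -> in_c0 c.
Proof.
  intros Hp Hcvg.
  apply (is_lim_seq_ext y c).
  - intro n. symmetry. exact (series_cvg_lp_unit_vec_coord p c y Hcvg n).
  - exact (in_lp_cvg0 p y Hp (proj1 Hcvg)).
Qed.

Theorem mainTheorem4 (p : R) (S : seqR -> Prop) :
  0 < p < 1 ->
  is_subspace S ->
  (forall x, S x -> in_linf x) ->
  infinite_dim S ->
  (forall x, in_c0 x -> S x) ->
  (exists x, S x /\ ~ in_c0 x) ->
  forall A : seqR -> Prop,
    (forall x, A x -> in_lp p x) ->
    ~ lineable_lp p unit_vec S A.
Proof.
  intros [Hp _] _ _ _ _ [c [Hc Hnc]] A _ Hlin.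
  destruct (Hlin c Hc) as [y [_ Hcvg]].
  exact (Hnc (series_cvg_lp_unit_vec_c0 p c y Hp Hcvg)).
Qed.
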